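(* Let $\kappa_{\mathrm{even}}$ denote the growth rate of the even model and $\kappa_{p\text{-}i}$ the growth rate of the $p$-$i$ model on the square lattice, as defined in the context. Then $\kappa_{\mathrm{even}}=\kappa_{p\text{-}i}$.
   Context: Work on the finite square lattice $[1,N]^2\subset\mathbb{Z}^2$, whose $N^2$ vertices carry spins $\oplus$ or $\ominus$. A spin configuration satisfies the even constraint if for any two $\ominus$ spins lying on a common horizontal or vertical line with no other $\ominus$ spin between them, the number of $\oplus$ spins between them is even. Let $Z^{\mathrm{even}}_N$ be the number of such configurations on $[1,N]^2$. The $p$-$i$ model places states on the bonds of $[1,N]^2$, including boundary bonds (so every vertex has four incident bonds), each state being $p$ or $i$. A labelling is valid if at every vertex: the number of incident bonds labelled $i$ is $0$ or $2$, and the two horizontal incident bonds are not both $i$, and the two vertical incident bonds are not both $i$ (i.e. no two adjacent $i$ states along any horizontal or vertical line). Let $Z^{p\text{-}i}_N$ be the number of valid labellings. (Intuitively, a bond's state records the parity, $p$ = even, $i$ = odd, of the number of $\oplus$ spins between it and the nearest $\ominus$ to its west/north.) The growth rate of a model is $\kappa=\lim_{N\to\infty} Z_N^{1/N^2}$ (these limits are taken to exist). *)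

From Stdlib Require Import Reals.
From Coquelicot Require Import Coquelicot.
From mathcomp Require Import all_boot.

Set Implicit Arguments.
Unset Strict Implicit.
Unset Printing Implicit Defensive.

(* Vertices of [1,N]^2 are indexed by 'I_N * 'I_N (row, column).
   A spin configuration maps a vertex to [true] for (+) and [false] for (-). *)
Definition spin_config (N : nat) := {ffun 'I_N * 'I_N -> bool}.

Definition even_constraint (N : nat) (s : spin_config N) : bool :=
  [forall i : 'I_N, forall j1 : 'I_N, forall j2 : 'I_N,
     ((j1 < j2)%N && ~~ s (i, j1) && ~~ s (i, j2)
      && [forall k : 'I_N, ((j1 < k)%N && (k < j2)%N) ==> s (i, k)])
     ==> ~~ odd #|[set k : 'I_N | (j1 < k)%N && (k < j2)%N && s (i, k)]|]
  &&
  [forall j : 'I_N, forall i1 : 'I_N, forall i2 : 'I_N,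
     ((i1 < i2)%N && ~~ s (i1, j) && ~~ s (i2, j)
      && [forall k : 'I_N, ((i1 < k)%N && (k < i2)%N) ==> s (k, j)])
     ==> ~~ odd #|[set k : 'I_N | (i1 < k)%N && (k < i2)%N && s (k, j)]|].

Definition Z_even (N : nat) : nat :=
  #|[set s : spin_config N | even_constraint s]|.

(* Horizontal bonds: row i in 'I_N, position p in 'I_N.+1; the vertex (i,j)
   has west bond (i, j) and east bond (i, j+1).  Boundary bonds are
   positions 0 and N.
   Vertical bonds: position p in 'I_N.+1, column j in 'I_N; the vertex (i,j)
   has north bond (i, j) and south bond (i+1, j).
   A bond state is [true] for i (odd) and [false] for p (even). *)
Definition pi_labelling (N : nat) :=
  ({ffun 'I_N * 'I_N.+1 -> bool} * {ffun 'I_N.+1 * 'I_N -> bool})%type.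

Definition pi_vertex_ok (w e n s : bool) : bool :=
  [&& ((w + e + n + s)%N == 0%N) || ((w + e + n + s)%N == 2%N),
      ~~ (w && e) & ~~ (n && s)].

Definition pi_valid (N : nat) (L : pi_labelling N) : bool :=
  [forall i : 'I_N, forall j : 'I_N,
     pi_vertex_ok (L.1 (i, widen_ord (leqnSn N) j)) (L.1 (i, lift ord0 j))
                  (L.2 (widen_ord (leqnSn N) i, j)) (L.2 (lift ord0 i, j))].

Definition Z_pi (N : nat) : nat :=
  #|[set L : pi_labelling N | pi_valid L]|.

Definition growth_seq (Z : nat -> nat) (N : nat) : R :=
  Rpower (INR (Z N)) (/ INR (N * N)).

(* A spin configuration determines the p-i labelling line by line: along a
   row (or column) the bond state is p on both sides of a minus spin and flips
   across each plus spin, and the spin at a vertex is plus exactly when one of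
   its bonds is i.  Such bond states exist on a line iff the spins satisfy the
   even constraint there, and they are unique once the first bond of the line
   is fixed.  Hence Z_even <= Z_pi <= 4^N Z_even, and the factor 4^N disappears
   in the N^2-th root. *)

From Stdlib Require Import Reals Lra.
From Coquelicot Require Import Coquelicot.
From mathcomp Require Import all_boot.
From mathcomp Require Import zify.

Set Implicit Arguments.
Unset Strict Implicit.
Unset Printing Implicit Defensive.

Local Open Scope nat_scope.

Definition even_line (x : nat -> bool) (n : nat) : Prop :=
  forall j1 j2, j1 < j2 < n -> ~~ x j1 -> ~~ x j2 ->
  (forall k, j1 < k < j2 -> x k) -> ~~ odd (j2 - j1.+1).

(* Site [j] of a line lies between bonds [j] and [j.+1]. *)
Definition site_ok (p w e : bool) : bool := if p then w != e else ~~ w && ~~ e.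

Definition labels_line (x b : nat -> bool) (n : nat) : Prop :=
  forall j, j < n -> site_ok (x j) (b j) (b j.+1).

Section LabelledLine.

Variables (x b : nat -> bool) (n : nat).
Hypothesis x_b : labels_line x b n.

Lemma labels_line_succ j : j < n -> b j.+1 = x j && ~~ b j.
Proof.
by move=> /x_b; rewrite /site_ok; case: (x j); case: (b j); case: (b j.+1).
Qed.

Lemma labels_line_run a t : a + t <= n -> (forall k, a <= k < a + t -> x k) ->
  b (a + t) = odd t (+) b a.
Proof.
elim: t => [|t IH] le_n run; first by rewrite addn0.
have run' : forall k, a <= k < a + t -> x k.
  by move=> k /andP[? ?]; apply: run; lia.
rewrite addnS labels_line_succ; last by lia.
rewrite run ?IH //=; [by case: (odd t); case: (b a) | by lia | by lia].
Qed.

Lemma labels_line_even : even_line x n.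
Proof.
move=> j1 j2 /andP[lt12 lt2n] minus1 minus2 run.
have b1 : b j1.+1 = false by rewrite labels_line_succ ?(negbTE minus1) //; lia.
have b2 : b j2 = false.
  by have := x_b lt2n; rewrite /site_ok (negbTE minus2) => /andP[/negbTE].
have := @labels_line_run j1.+1 (j2 - j1.+1).
by rewrite subnKC // b1 b2 addbF => <- //; apply: ltnW.
Qed.

End LabelledLine.

Lemma labels_line_uniq x b1 b2 n : labels_line x b1 n -> labels_line x b2 n ->
  b1 0 = b2 0 -> forall j, j <= n -> b1 j = b2 j.
Proof.
move=> x_b1 x_b2 eq0; elim=> [//|j IH] lt_jn.
by rewrite (labels_line_succ x_b1) // (labels_line_succ x_b2) // IH // ltnW.
Qed.

(* [line_bonds x c] are the bond states forced by the spins once the first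
   bond is [c]; [canonical_bonds] chooses [c] so that the bond at the first
   minus spin is p. *)
Fixpoint line_bonds (x : nat -> bool) (c : bool) (k : nat) : bool :=
  if k is k'.+1 then x k' && ~~ line_bonds x c k' else c.

Definition first_minus_odd (x : nat -> bool) (n : nat) : bool :=
  [exists m : 'I_n, [&& ~~ x m, [forall k : 'I_n, (k < m) ==> x k] & odd m]].

Definition canonical_bonds (x : nat -> bool) (n : nat) : nat -> bool :=
  line_bonds x (first_minus_odd x n).

Lemma first_minus_oddE x n m : m < n -> ~~ x m -> (forall k, k < m -> x k) ->
  first_minus_odd x n = odd m.
Proof.
move=> lt_mn minus run.
apply/existsP/idP => [[m' /and3P[minus' /forallP run' odd']]|odd_m].
- case: (ltngtP m' m) => [lt|gt|<- //].
  + by rewrite run in minus'.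
  + by have := run' (Ordinal lt_mn); rewrite /= gt (negbTE minus).
- exists (Ordinal lt_mn); rewrite /= minus odd_m andbT.
  by apply/forallP => k; apply/implyP/run.
Qed.

Section EvenLine.

Variables (x : nat -> bool) (n : nat).
Hypothesis x_even : even_line x n.

Lemma canonical_bonds_run j m :
  j <= m < n -> ~~ x m -> (forall k, j <= k < m -> x k) ->
  canonical_bonds x n j = odd (m - j).
Proof.
rewrite /canonical_bonds; elim: j => [|j IH] /andP[le_jm lt_mn] minus run.
  by rewrite subn0; apply: first_minus_oddE => // k lt_km; apply: run.
rewrite /=; case x_j: (x j) => /=.
- have run' : forall k, j <= k < m -> x k.
    move=> k /andP[le_jk lt_km]; case: (eqVneq k j) => [-> // | ne_kj].
    by apply: run; lia.
  by rewrite (IH _ minus run') ?(ltnW le_jm) // -subnSK //= negbK.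
- by apply/esym/negbTE/x_even; rewrite ?x_j ?le_jm.
Qed.

Lemma even_line_labels : labels_line x (canonical_bonds x n) n.
Proof.
move=> j lt_jn; rewrite /site_ok.
have -> : canonical_bonds x n j.+1 = x j && ~~ canonical_bonds x n j by [].
case x_j: (x j) => /=; first by case: (canonical_bonds x n j).
by rewrite andbT (@canonical_bonds_run j j) ?subnn ?x_j //; lia.
Qed.

End EvenLine.

(* Extension by [false] of a function on ['I_n]; the line predicates above
   only look at positions below [n] (resp. [n.+1] for bonds). *)
Definition natf n (f : 'I_n -> bool) (k : nat) : bool := oapp f false (insub k).

Lemma natfE n (f : 'I_n -> bool) (k : 'I_n) : natf f k = f k.
Proof. by rewrite /natf valK. Qed.

Lemma card_ord_between n a b : b <= n -> #|[set k : 'I_n | a < k < b]| = b - a.+1.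
Proof.
have count_gt_iota m : count (fun k => a < k) (iota 0 m) = m - a.+1.
  by elim: m => [//|m IH]; rewrite -[m.+1]addn1 iotaD count_cat IH /=; lia.
move=> le_bn; rewrite cardsE cardE /enum_mem size_filter -enumT.
rewrite -(count_map val (fun k => a < k < b)) val_enum_ord.
by rewrite -(count_filter (fun k => a < k)) (filter_iota_ltn 0 le_bn).
Qed.

Lemma card_ord_run n (x : 'I_n -> bool) a b : b <= n ->
  (forall k : 'I_n, a < k < b -> x k) ->
  #|[set k : 'I_n | (a < k < b) && x k]| = b - a.+1.
Proof.
move=> le_bn run; rewrite -(card_ord_between a le_bn).
by apply: eq_card => k; rewrite !inE; apply/andb_idr/run.
Qed.

Definition even_ordline n (x : 'I_n -> bool) : bool :=
  [forall j1 : 'I_n, forall j2 : 'I_n,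
     ((j1 < j2) && ~~ x j1 && ~~ x j2 && [forall k : 'I_n, (j1 < k < j2) ==> x k])
     ==> ~~ odd #|[set k : 'I_n | (j1 < k < j2) && x k]|].

Lemma even_constraintE N (s : spin_config N) : even_constraint s =
  [forall i, even_ordline (fun j => s (i, j))] &&
  [forall j, even_ordline (fun i => s (i, j))].
Proof. by []. Qed.

Lemma even_ordlineP n (x : 'I_n -> bool) :
  reflect (even_line (natf x) n) (even_ordline x).
Proof.
apply: (iffP forallP) => [even_x j1 j2 /andP[lt12 lt2n] minus1 minus2 run|even_x j1].
- have lt1n := ltn_trans lt12 lt2n.
  have run' (k : 'I_n) : j1 < k < j2 -> x k by move/run; rewrite natfE.
  have := implyP (forallP (even_x (Ordinal lt1n)) (Ordinal lt2n)).
  rewrite card_ord_run ?(ltnW lt2n) //; apply.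
  move: minus1 minus2; rewrite -[j1]/(val (Ordinal lt1n)) -[j2]/(val (Ordinal lt2n)).
  rewrite !natfE /= lt12 => -> ->.
  by apply/forallP => k; apply/implyP/run'.
- apply/forallP => j2; apply/implyP.
  case/andP=> /andP[/andP[lt12 minus1] minus2] /forallP run.
  have run' (k : 'I_n) : j1 < k < j2 -> x k by apply/implyP/run.
  rewrite card_ord_run ?(ltnW (ltn_ord j2)) //.
  apply: even_x; rewrite ?lt12 ?ltn_ord ?natfE // => k /andP[lt1k ltk2].
  have ltkn : k < n by apply: ltn_trans ltk2 (ltn_ord j2).
  by rewrite -[k]/(val (Ordinal ltkn)) natfE; apply: run'; rewrite lt1k.
Qed.

Lemma pi_vertex_okE w e n s :
  pi_vertex_ok w e n s = site_ok [|| w, e, n | s] w e && site_ok [|| w, e, n | s] n s.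
Proof. by case: w; case: e; case: n; case: s. Qed.

Lemma site_ok_spin p w e n s :
  site_ok p w e && site_ok p n s -> p = [|| w, e, n | s].
Proof. by case: p; case: w; case: e; case: n; case: s. Qed.

Lemma natf_widen n (f : 'I_n.+1 -> bool) (j : 'I_n) :
  natf f j = f (widen_ord (leqnSn n) j).
Proof. exact: (natfE f (widen_ord _ j)). Qed.

Lemma natf_lift n (f : 'I_n.+1 -> bool) (j : 'I_n) : natf f j.+1 = f (lift ord0 j).
Proof. exact: (natfE f (lift ord0 j)). Qed.

Section Lattice.

Variable N : nat.

Definition hbonds (L : pi_labelling N) (i : 'I_N) : nat -> bool :=
  natf (fun p => L.1 (i, p)).
Definition vbonds (L : pi_labelling N) (j : 'I_N) : nat -> bool :=
  natf (fun p => L.2 (p, j)).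

Definition spin_of (L : pi_labelling N) : spin_config N :=
  [ffun v : 'I_N * 'I_N =>
     [|| L.1 (v.1, widen_ord (leqnSn N) v.2), L.1 (v.1, lift ord0 v.2),
         L.2 (widen_ord (leqnSn N) v.1, v.2) | L.2 (lift ord0 v.1, v.2)]].

Definition labelling_of (s : spin_config N) : pi_labelling N :=
  ([ffun v : 'I_N * 'I_N.+1 => canonical_bonds (natf (fun j => s (v.1, j))) N v.2],
   [ffun v : 'I_N.+1 * 'I_N => canonical_bonds (natf (fun i => s (i, v.2))) N v.1]).

Lemma pi_valid_lines L : pi_valid L ->
  (forall i, labels_line (natf (fun j => spin_of L (i, j))) (hbonds L i) N) /\
  (forall j, labels_line (natf (fun i => spin_of L (i, j))) (vbonds L j) N).
Proof.
move=> /forallP valid_L; split=> [i j lt_jN | j i lt_iN].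
- have := forallP (valid_L i) (Ordinal lt_jN).
  rewrite pi_vertex_okE -[j]/(val (Ordinal lt_jN)) natfE.
  by rewrite /hbonds natf_widen natf_lift ffunE => /andP[].
- have := forallP (valid_L (Ordinal lt_iN)) j.
  rewrite pi_vertex_okE -[i]/(val (Ordinal lt_iN)) natfE.
  by rewrite /vbonds natf_widen natf_lift ffunE => /andP[].
Qed.

Lemma labelling_of_site s : even_constraint s -> forall i j,
  site_ok (s (i, j)) ((labelling_of s).1 (i, widen_ord (leqnSn N) j))
                     ((labelling_of s).1 (i, lift ord0 j)) &&
  site_ok (s (i, j)) ((labelling_of s).2 (widen_ord (leqnSn N) i, j))
                     ((labelling_of s).2 (lift ord0 i, j)).
Proof.
rewrite even_constraintE => /andP[/forallP even_rows /forallP even_cols] i j.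
have /even_line_labels/(_ j (ltn_ord j)) := even_ordlineP _ (even_rows i).
have /even_line_labels/(_ i (ltn_ord i)) := even_ordlineP _ (even_cols j).
by rewrite !natfE !ffunE => -> ->.
Qed.

Lemma labelling_of_valid s : even_constraint s -> pi_valid (labelling_of s).
Proof.
move=> even_s; apply/forallP => i; apply/forallP => j.
have site := labelling_of_site even_s i j.
by rewrite pi_vertex_okE -(site_ok_spin site).
Qed.

Lemma spin_of_labelling_of s : even_constraint s -> spin_of (labelling_of s) = s.
Proof.
move=> even_s; apply/ffunP => -[i j]; rewrite ffunE.
by rewrite -(site_ok_spin (labelling_of_site even_s i j)).
Qed.

Lemma spin_of_even L : pi_valid L -> even_constraint (spin_of L).
Proof.
case/pi_valid_lines => rows cols; rewrite even_constraintE.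
by apply/andP; split; apply/forallP => k; apply/even_ordlineP/labels_line_even;
  [exact: rows | exact: cols].
Qed.

Definition spin_boundary (L : pi_labelling N) :
    spin_config N * {ffun 'I_N -> bool} * {ffun 'I_N -> bool} :=
  (spin_of L, [ffun i => L.1 (i, ord0)], [ffun j => L.2 (ord0, j)]).

Lemma spin_boundary_inj : {in [set L | pi_valid L] &, injective spin_boundary}.
Proof.
move=> [h1 v1] [h2 v2]; rewrite !inE => /pi_valid_lines[rows1 cols1].
move=> /pi_valid_lines[rows2 cols2] [spin_eq /ffunP west_eq /ffunP north_eq].
rewrite {}spin_eq in rows1 cols1.
congr pair; apply/ffunP => -[a b].
- have := labels_line_uniq (rows1 a) (rows2 a) _ (leq_ord b).
  rewrite /hbonds !natfE; apply.
  by have := west_eq a; rewrite -[0]/(val (@ord0 N)) !natfE !ffunE.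
- have := labels_line_uniq (cols1 b) (cols2 b) _ (leq_ord a).
  rewrite /vbonds !natfE; apply.
  by have := north_eq b; rewrite -[0]/(val (@ord0 N)) !natfE !ffunE.
Qed.

End Lattice.

Lemma Z_even_gt0 N : 0 < Z_even N.
Proof.
apply/card_gt0P; exists [ffun _ => true]; rewrite inE even_constraintE.
by apply/andP; split; apply/forallP => i; apply/forallP => j1; apply/forallP => j2;
  rewrite !ffunE andbF.
Qed.

Lemma Z_even_le_Z_pi N : Z_even N <= Z_pi N.
Proof.
have labelling_of_inj : {in [set s : spin_config N | even_constraint s] &,
    injective (@labelling_of N)}.
  move=> s1 s2; rewrite !inE => even1 even2 eq_labelling.
  by rewrite -(spin_of_labelling_of even1) eq_labelling spin_of_labelling_of.
rewrite /Z_even -(card_in_imset labelling_of_inj); apply/subset_leq_card/subsetP.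
move=> _ /imsetP[s even_s ->]; rewrite inE labelling_of_valid //.
by move: even_s; rewrite inE.
Qed.

Lemma Z_pi_le N : Z_pi N <= 4 ^ N * Z_even N.
Proof.
rewrite /Z_pi -(card_in_imset (@spin_boundary_inj N)).
apply: (@leq_trans #|setX (setX [set s : spin_config N | even_constraint s]
                              [set: {ffun 'I_N -> bool}]) [set: {ffun 'I_N -> bool}]|).
  apply/subset_leq_card/subsetP => _ /imsetP[L valid_L ->].
  by rewrite !inE !andbT spin_of_even //; move: valid_L; rewrite inE.
rewrite !cardsX !cardsT card_ffun card_bool card_ord -/(Z_even N).
by rewrite -mulnA -expnMn mulnC.
Qed.

Local Open Scope R_scope.

Lemma INR_expn m n : INR (m ^ n)%N = INR m ^ n.
Proof.
by elim: n => [//|n IH]; rewrite expnS -tech_pow_Rmult -IH; apply: mult_INR.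
Qed.

Lemma inv_INR_ge0 n : 0 <= / INR n.
Proof.
case: n => [|n]; first by rewrite Rinv_0; apply: Rle_refl.
by apply/Rlt_le/Rinv_0_lt_compat/lt_0_INR/ltP.
Qed.

Lemma growth_seq_le (Z1 Z2 : nat -> nat) N : (0 < Z1 N <= Z2 N)%N ->
  growth_seq Z1 N <= growth_seq Z2 N.
Proof.
case/andP=> Z1_gt0 le12; apply: Rle_Rpower_l; first exact: inv_INR_ge0.
by split; [apply/lt_0_INR/ltP | apply/le_INR/leP].
Qed.

Lemma growth_seq_le_expn (Z1 Z2 : nat -> nat) C N :
  (0 < Z2 N)%N -> (Z2 N <= C ^ N * Z1 N)%N ->
  growth_seq Z2 N <= Rpower (INR C) (/ INR N) * growth_seq Z1 N.
Proof.
case: N => [|N] Z2_gt0 le_Z2.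
  rewrite /growth_seq /Rpower mul0n /= Rinv_0 !Rmult_0_l exp_0 Rmult_1_l.
  exact: Rle_refl.
have := leq_trans Z2_gt0 le_Z2.
rewrite muln_gt0 expn_gt0 /= orbF => /andP[C_gt0 Z1_gt0].
apply: (Rle_trans _ (growth_seq (fun n => C ^ n * Z1 n)%N N.+1)).
  by apply: growth_seq_le; rewrite Z2_gt0.
rewrite /growth_seq mult_INR -Rpower_mult_distr; last 2 first.
- by apply/lt_0_INR/ltP; rewrite expn_gt0 C_gt0.
- exact/lt_0_INR/ltP.
rewrite INR_expn -Rpower_pow ?Rpower_mult; last exact/lt_0_INR/ltP.
have N_neq0 : INR N.+1 <> 0 by apply: not_0_INR.
rewrite mult_INR; replace (INR N.+1 * / (INR N.+1 * INR N.+1)) with (/ INR N.+1).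
  exact: Rle_refl.
by field.
Qed.

Lemma is_lim_seq_Rpower_inv_INR x : is_lim_seq (fun N => Rpower x (/ INR N)) 1.
Proof.
rewrite -exp_0; apply: (is_lim_seq_continuous exp (fun N => / INR N * ln x)).
  exact: derivable_continuous_pt (derivable_pt_exp 0).
have -> : Rbar.Finite 0 = Rbar_mult (Rbar_inv p_infty) (ln x).
  by rewrite /= Rmult_0_l.
by apply/is_lim_seq_scal_r/is_lim_seq_inv; [exact: is_lim_seq_INR |].
Qed.

Lemma growth_lim_eq_of_le_expn (Z1 Z2 : nat -> nat) C (k1 k2 : R) :
  (forall N, 0 < Z1 N <= Z2 N)%N -> (forall N, Z2 N <= C ^ N * Z1 N)%N ->
  is_lim_seq (growth_seq Z1) k1 -> is_lim_seq (growth_seq Z2) k2 -> k1 = k2.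
Proof.
move=> le12 le21 lim1 lim2.
have : Rbar_le k1 k2 by apply: is_lim_seq_le lim1 lim2 => N; apply: growth_seq_le.
have : Rbar_le k2 (1 * k1).
  have lim_C := is_lim_seq_Rpower_inv_INR (INR C).
  apply: is_lim_seq_le lim2 (is_lim_seq_mult' _ _ _ _ lim_C lim1).
  move=> N; apply: growth_seq_le_expn (le21 N).
  by case/andP: (le12 N) => Z1_gt0; apply: leq_trans.
rewrite /=; lra.
Qed.

Theorem mainTheorem2 (kappa_even kappa_pi : R) :
  is_lim_seq (growth_seq Z_even) kappa_even ->
  is_lim_seq (growth_seq Z_pi) kappa_pi ->
  kappa_even = kappa_pi.
Proof.
apply: (@growth_lim_eq_of_le_expn _ _ 4) => N; last exact: Z_pi_le.
by rewrite Z_even_gt0 Z_even_le_Z_pi.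
Qed.
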